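(* Let $G$ be a Tutte-Berge graph and $U\subseteq V(G)$. Let $G_1$ and $G_2$ be the induced subgraphs of $G$ on $U$ and on $V(G)\setminus U$, respectively. Assume there is a maximum matching $M$ of $G$ and a partition $M=M_1\cup M_2$ with all edges of $M_1$ in $G_1$ and all edges of $M_2$ in $G_2$. Then $G_1$ and $G_2$ are Tutte-Berge graphs.
   Context: $\nu(G)$ is the matching number of $G$. For $U\subseteq V(G)$, $N_G(U)$ is the set of vertices adjacent to at least one vertex of $U$. $G$ is a Tutte-Berge graph if there exists an independent set $T$ of $G$ with $|T| = |N_G(T)| + |V(G)| - 2\nu(G)$. *)

From mathcomp Require Import all_boot.
Set Implicit Arguments. Unset Strict Implicit. Unset Printing Implicit Defensive.

(* Graph notions are defined for the subgraph
   induced on a vertex set S; the whole graph G is the case S = [set: T]. *)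

Definition simple_graph (T : finType) (e : rel T) : Prop :=
  irreflexive e /\ symmetric e.

Definition is_edge_in (T : finType) (e : rel T) (S : {set T}) (f : {set T}) : bool :=
  [exists x, exists y, [&& x \in S, y \in S, e x y & f == [set x; y]]].

Definition is_matching (T : finType) (e : rel T) (S : {set T}) (M : {set {set T}}) : bool :=
  [forall f in M, is_edge_in e S f] &&
  [forall f in M, forall g in M, (f != g) ==> [disjoint f & g]].

Definition nu (T : finType) (e : rel T) (S : {set T}) : nat :=
  \max_(M : {set {set T}} | is_matching e S M) #|M|.

Definition is_maximum_matching (T : finType) (e : rel T) (S : {set T})
  (M : {set {set T}}) : bool :=
  is_matching e S M && (#|M| == nu e S).

Definition nbhd (T : finType) (e : rel T) (S U : {set T}) : {set T} :=
  [set y in S | [exists x in U, e x y]].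

Definition independent (T : finType) (e : rel T) (S I : {set T}) : bool :=
  (I \subset S) && [forall x in I, forall y in I, ~~ e x y].

(* Tutte-Berge graph: exists independent I with |I| = |N(I)| + |V| - 2 nu.
   Stated without truncated subtraction (|V| >= 2 nu always). *)
Definition tutte_berge (T : finType) (e : rel T) (S : {set T}) : Prop :=
  exists I : {set T}, independent e S I /\
    #|I| + 2 * nu e S = #|nbhd e S I| + #|S|.

From mathcomp Require Import all_boot zify.
Set Implicit Arguments. Unset Strict Implicit. Unset Printing Implicit Defensive.

(* For every matching M and independent set I of a graph on S one has the weak
   Tutte-Berge inequality |I| + 2|M| <= |N(I)| + |S|: deleting an edge of M
   removes two vertices of S and at least as many vertices of N(I) as of I.
   In G the maximum matching M1 + M2 and the independent set I are tight; the
   restrictions of I to U and to its complement satisfy the inequality with M1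
   and M2 respectively, and their neighbourhoods are disjoint inside N(I), so
   the two inequalities add up to at most the tight one, forcing both sides to
   be tight.  Tightness makes M1 (resp. M2) maximum and witnesses that G1
   (resp. G2) is Tutte-Berge. *)

Section TutteBerge.
Variables (T : finType) (e : rel T).

Lemma edge_in_subset (S f : {set T}) : is_edge_in e S f -> f \subset S.
Proof.
case/existsP=> x /existsP[y /and4P[xS yS _ /eqP->]].
by apply/subsetP=> z; rewrite !inE => /orP[]/eqP->.
Qed.

Lemma matching_sub (S S' : {set T}) (M M' : {set {set T}}) :
  is_matching e S M -> M' \subset M ->
  (forall f, f \in M' -> f \subset S') -> is_matching e S' M'.
Proof.
case/andP=> /forall_inP hedge /forall_inP hdis /subsetP sM' hS'.
apply/andP; split; apply/forall_inP => f fM'.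
- have /existsP[x /existsP[y /and4P[_ _ exy /eqP fE]]] := hedge f (sM' f fM').
  move: (hS' f fM'); rewrite fE => /subsetP fS'.
  apply/existsP; exists x; apply/existsP; exists y.
  by rewrite !fS' ?exy ?eqxx // !inE eqxx ?orbT.
- apply/forall_inP => g gM'.
  exact: (forall_inP (hdis f (sM' f fM')) g (sM' g gM')).
Qed.

Lemma matching_setD (S : {set T}) (M : {set {set T}}) (f : {set T}) :
  is_matching e S M -> f \in M -> is_matching e (S :\: f) (M :\ f).
Proof.
move=> hM fM; apply: (matching_sub hM (subsetDl _ _)) => g /setD1P[gf gM].
case/andP: hM => /forall_inP hedge /forall_inP hdis.
rewrite subsetD edge_in_subset ?hedge //=.
exact: (implyP (forall_inP (hdis g gM) f fM) gf).
Qed.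

Lemma leq_card_nu (S : {set T}) (M : {set {set T}}) :
  is_matching e S M -> #|M| <= nu e S.
Proof. exact: (@leq_bigmax_cond _ (is_matching e S) (fun M => #|M|)). Qed.

Lemma independentP (S I : {set T}) (x y : T) :
  independent e S I -> x \in I -> y \in I -> ~~ e x y.
Proof. by case/andP=> _ /forall_inP hI xI yI; exact: (forall_inP (hI x xI) y yI). Qed.

Lemma independentI (S S' I : {set T}) : independent e S I -> independent e S' (I :&: S').
Proof.
move=> hI; rewrite /independent subsetIr /=.
apply/forall_inP => x /setIP[xI _]; apply/forall_inP => y /setIP[yI _].
exact: independentP hI xI yI.
Qed.

Lemma nbhd_restrict (S S' I : {set T}) : S' \subset S ->
  nbhd e S' (I :&: S') \subset nbhd e S I :&: S'.
Proof.
move=> /subsetP sS'; apply/subsetP => z; rewrite !inE.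
case/andP=> zS' /existsP[w /andP[/setIP[wI _] ewz]].
by rewrite sS' //= zS' andbT; apply/existsP; exists w; rewrite wI.
Qed.

Lemma cardsI_setD (S A F : {set T}) :
  A \subset S -> #|A :&: F| + #|A :&: (S :\: F)| = #|A|.
Proof. by move=> sAS; rewrite setIDA (setIidPl sAS) cardsID. Qed.

Hypothesis simple_e : simple_graph e.

Lemma card_independent_edge (S I : {set T}) (x y : T) : independent e S I ->
  x \in S -> y \in S -> e x y ->
  #|I :&: [set x; y]| <= #|nbhd e S I :&: [set x; y]|.
Proof.
move=> hI.
wlog xI : x y / x \in I => [claim xS yS exy|].
  case xI: (x \in I); first exact: claim.
  case yI: (y \in I).
    by rewrite setUC; apply: claim => //; case: simple_e => _ ->.
  suff -> : I :&: [set x; y] = set0 by rewrite cards0.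
  apply/setP=> z; rewrite !inE.
  by apply/andP=> -[zI /orP[]/eqP zE]; rewrite zE ?xI ?yI in zI.
move=> xS yS exy.
have yI : y \notin I by apply: contraL exy => yI; exact: independentP hI xI yI.
have yN : y \in nbhd e S I :&: [set x; y].
  by rewrite !inE yS eqxx orbT andbT; apply/existsP; exists x; rewrite xI.
apply: (@leq_trans 1); last by apply/card_gt0P; exists y.
rewrite -(cards1 x); apply/subset_leq_card/subsetP => z; rewrite !inE.
by case/andP=> zI /orP[// | /eqP zy]; move: yI; rewrite -zy zI.
Qed.

Lemma tutte_berge_bound (S I : {set T}) (M : {set {set T}}) :
  is_matching e S M -> independent e S I ->
  #|I| + 2 * #|M| <= #|nbhd e S I| + #|S|.
Proof.
move: {2}#|M| (erefl #|M|) => n; elim: n S I M => [|n IH] S I M cardM hM hI.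
  by case/andP: hI => /subset_leq_card; lia.
have [f fM] : exists f, f \in M by apply/set0Pn; rewrite -card_gt0 cardM.
have edge_f : is_edge_in e S f by case/andP: hM => /forall_inP ->.
have fS := edge_in_subset edge_f.
case/existsP: edge_f => x /existsP[y /and4P[xS yS exy /eqP fE]].
have card_f : #|f| = 2.
  have xy : x != y.
    by apply: contraTneq exy => ->; case: simple_e => irr _; rewrite irr.
  by rewrite fE cards2 xy.
have cardM' : #|M :\ f| = n by move: cardM; rewrite (cardsD1 f) fM => -[].
have := IH _ _ _ cardM' (matching_setD hM fM) (independentI (S :\: f) hI).
have := card_independent_edge hI xS yS exy; rewrite -fE => cardIf.
have sIS : I \subset S by case/andP: hI.
have sNS : nbhd e S I \subset S by apply/subsetP => z; rewrite inE => /andP[].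
have cardN' := subset_leq_card (nbhd_restrict I (subsetDl S f)).
have cardI := cardsI_setD f sIS.
have cardN := cardsI_setD f sNS.
have := cardsID f S; rewrite (setIidPr fS) card_f => cardS.
lia.
Qed.

Lemma tight_tutte_berge (S I : {set T}) (M : {set {set T}}) :
  is_matching e S M -> independent e S I ->
  #|I| + 2 * #|M| = #|nbhd e S I| + #|S| -> tutte_berge e S.
Proof.
move=> hM hI tight; exists I; split => //.
suff -> : nu e S = #|M| by [].
apply/eqP; rewrite eqn_leq leq_card_nu // andbT.
apply/bigmax_leqP => M' hM'; have := tutte_berge_bound hM' hI; lia.
Qed.

Lemma tutte_berge_matching_split (U I : {set T}) (M1 M2 : {set {set T}}) :
  independent e [set: T] I -> is_matching e [set: T] (M1 :|: M2) ->
  [disjoint M1 & M2] ->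
  (forall f, f \in M1 -> f \subset U) -> (forall f, f \in M2 -> f \subset ~: U) ->
  #|I| + 2 * #|M1 :|: M2| = #|nbhd e [set: T] I| + #|[set: T]| ->
  tutte_berge e U.
Proof.
move=> hI hM dM sM1 sM2 tight.
have m1 := matching_sub hM (subsetUl M1 M2) sM1.
have m2 := matching_sub hM (subsetUr M1 M2) sM2.
have cardM : #|M1 :|: M2| = #|M1| + #|M2|.
  by rewrite cardsU (disjoint_setI0 dM) cards0 subn0.
have bound2 := tutte_berge_bound m2 (independentI (~: U) hI).
have cardI := cardsI_setD U (subsetT I); rewrite setTD in cardI.
have cardN := cardsI_setD U (subsetT (nbhd e [set: T] I)); rewrite setTD in cardN.
have cardN1 := subset_leq_card (nbhd_restrict I (subsetT U)).
have cardN2 := subset_leq_card (nbhd_restrict I (subsetT (~: U))).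
have cardV := cardsC U; rewrite -cardsT in cardV.
apply: (tight_tutte_berge m1 (independentI U hI)).
have := tutte_berge_bound m1 (independentI U hI); lia.
Qed.

End TutteBerge.

Theorem lemma2p8 (T : finType) (e : rel T) (U : {set T})
  (M M1 M2 : {set {set T}}) :
  simple_graph e ->
  tutte_berge e [set: T] ->
  is_maximum_matching e [set: T] M ->
  M = M1 :|: M2 -> [disjoint M1 & M2] ->
  (forall f, f \in M1 -> f \subset U) ->
  (forall f, f \in M2 -> f \subset ~: U) ->
  tutte_berge e U /\ tutte_berge e (~: U).
Proof.
move=> simple_e [I [hI tight]] /andP[hM /eqP maxM] defM dM sM1 sM2.
rewrite -maxM defM in tight; rewrite defM in hM.
split; first exact: tutte_berge_matching_split hI hM dM sM1 sM2 tight.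
rewrite setUC in hM tight.
apply: tutte_berge_matching_split hI hM _ sM2 _ tight => //.
- by rewrite disjoint_sym.
- by move=> f /sM1; rewrite setCK.
Qed.
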